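(* Let $n\ge3$, let $e_1,\dots,e_n\ge1$ be integers, let $p$ be a prime with $p>\max\{e_1,\dots,e_n\}$, and let $R$ be a nonzero $\mathbf F_p$-algebra (commutative, unital). If $\max\{e_1,\dots,e_n\}>1$, then $G_{R,n;e_1,\dots,e_n}$ contains an elementary abelian $p$-group of infinite rank; in particular it is infinite.
   Context: For distinct $i,j$, $e\ge0$, $r\in R$: $\alpha_{i;j}^{(e)}(r)\in\mathrm{Aut}(R[x_1,\dots,x_n])$ maps $x_i\mapsto x_i+rx_j^e$ and fixes $x_\ell$ for $\ell\ne i$. $G_{R,n;e_1,\dots,e_n}$ is the subgroup generated by $\{\alpha_{i;i+1}^{(e_i)}(r): 1\le i\le n, r\in R\}$, indices modulo $n$. *)

From HB Require Import structures.
From mathcomp Require Import all_boot all_order all_algebra.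
From mathcomp Require Import mpoly.
Set Implicit Arguments. Unset Strict Implicit. Unset Printing Implicit Defensive.
Import GRing.Theory.
Local Open Scope ring_scope.

(* An R-algebra endomorphism of R[x_1..x_n] is represented by the n-tuple of
   images of the variables x_0, ..., x_(n-1) (0-based indices). *)
Definition endo (R : comNzRingType) (n : nat) := n.-tuple {mpoly R[n]}.

Definition endo_id (R : comNzRingType) (n : nat) : endo R n :=
  [tuple 'X_j | j < n].

(* composition: (endo_comp s t) = s o t, i.e. x_j |-> s(t(x_j)) = t_j(s_1,...,s_n) *)
Definition endo_comp (R : comNzRingType) (n : nat) (s t : endo R n) : endo R n :=
  [tuple comp_mpoly s (tnth t j) | j < n].

Fixpoint endo_pow (R : comNzRingType) (n : nat) (s : endo R n) (k : nat) : endo R n :=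
  match k with
  | 0%N => endo_id R n
  | k'.+1 => endo_comp s (endo_pow s k')
  end.

Definition alpha (R : comNzRingType) (n : nat) (i j : 'I_n) (e : nat) (r : R) : endo R n :=
  [tuple (if k == i then 'X_i + r *: 'X_j ^+ e else 'X_k) | k < n].

(* membership in G_{R,n;e_1..e_n}: the subgroup generated by the
   alpha_{i;i+1}^{(e_i)}(r) (indices cyclic via ordS).  Since
   alpha_{i;j}^{(e)}(r) has inverse alpha_{i;j}^{(e)}(-r), the generated
   subgroup consists of the finite compositions of generators. *)
Inductive inG (R : comNzRingType) (n : nat) (e : 'I_n -> nat) : endo R n -> Prop :=
  | inG_id : inG e (endo_id R n)
  | inG_gen (i : 'I_n) (r : R) (g : endo R n) :
      inG e g -> inG e (endo_comp (alpha i (ordS i) (e i) r) g).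

(* H is a subgroup of the group of automorphisms which is an elementary abelian
   p-group: contains id, closed under composition, commutative, exponent p
   (inverses are then given by h^(p-1)). *)
Definition elem_abelian_p_subgroup (R : comNzRingType) (n p : nat)
    (H : endo R n -> Prop) : Prop :=
  [/\ H (endo_id R n),
      (forall g h, H g -> H h -> H (endo_comp g h)),
      (forall g h, H g -> H h -> endo_comp g h = endo_comp h g)
    & (forall h, H h -> endo_pow h p = endo_id R n)].

Definition infinite_set (T : eqType) (H : T -> Prop) : Prop :=
  forall s : seq T, exists x, H x /\ x \notin s.

From mathcomp Require Import all_boot all_order all_algebra.
From mathcomp Require Import mpoly.
From mathcomp Require Import ring zify.
Set Implicit Arguments. Unset Strict Implicit. Unset Printing Implicit Defensive.
Import GRing.Theory.
Local Open Scope ring_scope.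

(* Call x_i |-> x_i + f, with f free of x_i, elementary in x_i.  Elementary
   maps in a fixed variable compose by adding their shifts, so those lying in G
   form an abelian group of exponent p.  Conjugating x_i |-> x_i + c x_(i+1)^d
   by x_(i+1) |-> x_(i+1) + lam Y gives x_i |-> x_i + c (x_(i+1) + lam Y)^d;
   since d! is invertible, a d-th finite difference in lam isolates
   x_i |-> x_i + r Y^d.  Descending from the generator
   x_(n-1) |-> x_(n-1) + r x_0^(e_(n-1)) this puts x_1 |-> x_1 + r x_0^D in G,
   where D = e_1 ... e_(n-1).  Then tau = (x_0 |-> x_0 + x_1^(e_0)) o
   (x_1 |-> x_1 + x_0^D) fixes x_(n-1), and the conjugates of the generator
   x_(n-1) |-> x_(n-1) + x_0^(e_(n-1)) by the powers of tau are elementary in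
   x_(n-1).  Specialising x_1 to X and the other variables to 0, the degrees of
   their shifts grow like (e_0 ... e_(n-1))^t, which is unbounded as some
   e_i > 1, so these conjugates are pairwise distinct. *)

Section FiniteDifferences.
Variable S : comPzRingType.

Lemma alt_binom_sum_exp d i : (i <= d)%N ->
  \sum_(l < d.+1) ((-1) ^+ (d - l) * 'C(d, l)%:R) * (l%:R : S) ^+ i
  = if i == d then d`!%:R else 0.
Proof.
elim: d i => [|d IH] [|j] //= le_jd.
- by rewrite big_ord1 /= !mulr1.
- (* the binomial expansion of (-1 + 1)^(d+1) *)
  have := exprDn (-1 : S) 1 d.+1; rewrite addNr expr0n /= => zero_sum.
  rewrite [RHS]zero_sum.
  by apply: eq_bigr => l _; rewrite expr1n !mulr1 mulr_natr.
rewrite big_ord_recl /= expr0n /= mulr0 add0r.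
(* C(d+1, l+1) (l+1) = (d+1) C(d, l), then expand (l+1)^j binomially. *)
transitivity (\sum_(l < d.+1) \sum_(s < j.+1) ((d.+1)%:R * 'C(j, s)%:R) *
    (((-1) ^+ (d - l) * 'C(d, l)%:R) * (l%:R : S) ^+ (j - s))).
  apply: eq_bigr => l _; rewrite /bump /= add1n subSS exprS.
  have binS : 'C(d.+1, l.+1)%:R * l.+1%:R = d.+1%:R * 'C(d, l)%:R :> S.
    by rewrite -!natrM mulnC -mul_bin_diag.
  transitivity ((-1) ^+ (d - l) * ('C(d.+1, l.+1)%:R * l.+1%:R) * (l%:R + 1 : S) ^+ j).
    by rewrite natr1; ring.
  rewrite binS exprDn mulr_sumr; apply: eq_bigr => s _.
  by rewrite expr1n mulr1 mulr_natr; ring.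
rewrite exchange_big /=.
under eq_bigr => s _ do rewrite -mulr_sumr (IH _ (leq_trans (leq_subr s j) le_jd)).
rewrite big_ord_recl /= subn0 big1 ?addr0 => [|s _]; last first.
  by rewrite ifN ?mulr0 //; move: (ltn_ord s) le_jd; rewrite /bump /=; lia.
by rewrite bin0 mulr1 eqSS; case: eqP => [_|]; rewrite ?mulr0 // factS natrM.
Qed.

Lemma alt_binom_sum_affine_exp d (x y : S) :
  \sum_(l < d.+1) ((-1) ^+ (d - l) * 'C(d, l)%:R) * (x + l%:R * y) ^+ d
  = d`!%:R * y ^+ d.
Proof.
transitivity (\sum_(l < d.+1) \sum_(i < d.+1) (x ^+ (d - i) * y ^+ i *+ 'C(d, i)) *
    (((-1) ^+ (d - l) * 'C(d, l)%:R) * (l%:R : S) ^+ i)).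
  apply: eq_bigr => l _; rewrite exprDn mulr_sumr; apply: eq_bigr => i _.
  by rewrite exprMn; ring.
rewrite exchange_big /=.
under eq_bigr => i _ do rewrite -mulr_sumr (alt_binom_sum_exp (ltnSE (ltn_ord i))).
rewrite big_ord_recr /= big1 ?add0r => [|i _]; last by rewrite ltn_eqF ?mulr0.
by rewrite eqxx subnn expr0 mul1r binn mulr1n mulrC.
Qed.

End FiniteDifferences.

Lemma pchar_fact_inverse (R : comNzRingType) p d :
  p \in [pchar R] -> (d < p)%N -> exists u : R, u * d`!%:R = 1.
Proof.
move=> pcharRp lt_dp; have p_pr := pcharf_prime pcharRp.
have : coprime d`! p.
  rewrite coprime_sym prime_coprime //; elim: d lt_dp => [|d IH] lt_dp.
    by rewrite fact0 dvdn1 neq_ltn prime_gt1 ?orbT.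
  by rewrite factS Euclid_dvdM // negb_or IH ?(ltnW lt_dp) // gtnNdvd.
case: (egcdnP p (fact_gt0 d)) => a b Bezout _ /eqP cop.
exists a%:R; rewrite -natrM Bezout natrD natrM (pcharf0 pcharRp) mulr0 add0r.
by rewrite cop.
Qed.

Section Endomorphisms.
Variables (R : comNzRingType) (n : nat).
Implicit Types (s t u : endo R n) (f g : {mpoly R[n]}).

Lemma comp_mpolyXt i s : 'X_i \mPo s = tnth s i.
Proof. by rewrite comp_mpolyXU -tnth_nth. Qed.

Lemma comp_mpolyA s t f : f \mPo t \mPo s = f \mPo endo_comp s t.
Proof.
rewrite (comp_mpolyEX f t) (comp_mpolyEX f (endo_comp s t)) raddf_sum /=.
apply/eq_bigr => m _; rewrite comp_mpolyZ; congr (_ *: _).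
rewrite !comp_mpolyX rmorph_prod /=; apply/eq_bigr => i _.
by rewrite rmorphXn /= tnth_mktuple.
Qed.

Lemma endo_compA s t u : endo_comp (endo_comp s t) u = endo_comp s (endo_comp t u).
Proof. by apply: eq_from_tnth => j; rewrite !tnth_mktuple comp_mpolyA. Qed.

Lemma endo_comp1l t : endo_comp (endo_id R n) t = t.
Proof. by apply: eq_from_tnth => j; rewrite tnth_mktuple comp_mpoly_id. Qed.

Lemma endo_comp1r t : endo_comp t (endo_id R n) = t.
Proof. by apply: eq_from_tnth => j; rewrite !tnth_mktuple comp_mpolyXt. Qed.

Lemma endo_powSr s k : endo_pow s k.+1 = endo_comp (endo_pow s k) s.
Proof.
elim: k => [|k IH]; first by rewrite /= endo_comp1l endo_comp1r.
have -> : endo_pow s k.+2 = endo_comp s (endo_pow s k.+1) by [].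
by rewrite {1}IH -endo_compA.
Qed.

Definition dropv (i : 'I_n) : endo R n := [tuple (if k == i then 0 else 'X_k) | k < n].

Definition vfree (i : 'I_n) f := f \mPo dropv i = f.

Definition elem (i : 'I_n) f : endo R n :=
  [tuple (if k == i then 'X_i + f else 'X_k) | k < n].

Lemma tnth_elem i f j : tnth (elem i f) j = if j == i then 'X_i + f else 'X_j.
Proof. exact: tnth_mktuple. Qed.

Lemma vfree_comp_eq i f s t : vfree i f ->
  (forall j, j != i -> tnth s j = tnth t j) -> f \mPo s = f \mPo t.
Proof.
move=> fi st; rewrite -fi (comp_mpolyA s) (comp_mpolyA t).
have -> // : endo_comp s (dropv i) = endo_comp t (dropv i).
apply: eq_from_tnth => j; rewrite !tnth_mktuple.
by case: (eqVneq j i) => [_|/st]; rewrite ?comp_mpoly0 // !comp_mpolyXt.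
Qed.

Lemma vfree0 i : vfree i 0.
Proof. exact: comp_mpoly0. Qed.

Lemma vfreeXU i j : j != i -> vfree i 'X_j.
Proof. by move=> ji; rewrite /vfree comp_mpolyXt tnth_mktuple (negbTE ji). Qed.

Lemma vfreeD i f g : vfree i f -> vfree i g -> vfree i (f + g).
Proof. by rewrite /vfree comp_mpolyD => -> ->. Qed.

Lemma vfreeN i f : vfree i f -> vfree i (- f).
Proof. by rewrite /vfree comp_mpolyN => ->. Qed.

Lemma vfreeZ i c f : vfree i f -> vfree i (c *: f).
Proof. by rewrite /vfree comp_mpolyZ => ->. Qed.

Lemma vfreeX i f k : vfree i f -> vfree i (f ^+ k).
Proof. by rewrite /vfree rmorphXn /= => ->. Qed.

Lemma vfreeZXU i j c k : j != i -> vfree i (c *: 'X_j ^+ k).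
Proof. by move=> ji; apply/vfreeZ/vfreeX/vfreeXU. Qed.

Definition fixes (i : 'I_n) t :=
  tnth t i = 'X_i /\ forall j, j != i -> vfree i (tnth t j).

Lemma vfree_comp i f t : vfree i f -> fixes i t -> vfree i (f \mPo t).
Proof.
move=> fi [_ ti]; rewrite /vfree comp_mpolyA; apply: (vfree_comp_eq fi) => j ji.
by rewrite tnth_mktuple; apply: ti.
Qed.

Lemma fixes_comp i s t : fixes i s -> fixes i t -> fixes i (endo_comp s t).
Proof.
move=> [si si'] [ti ti']; split; first by rewrite tnth_mktuple ti comp_mpolyXt.
by move=> j ji; rewrite tnth_mktuple; apply: vfree_comp => //; apply: ti'.
Qed.

Lemma fixes_elem i j f : j != i -> vfree i f -> fixes i (elem j f).
Proof.
move=> ji fi; split; first by rewrite tnth_elem eq_sym (negbTE ji).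
move=> k ki; rewrite tnth_elem; case: eqP => _; last exact: vfreeXU.
by apply: vfreeD fi; apply: vfreeXU.
Qed.

Lemma comp_elem_vfree i f g : vfree i g -> g \mPo elem i f = g.
Proof.
move=> gi; rewrite (@vfree_comp_eq i g _ (endo_id R n)) ?comp_mpoly_id //.
by move=> j ji; rewrite tnth_elem tnth_mktuple (negbTE ji).
Qed.

Lemma elem0 i : elem i 0 = endo_id R n.
Proof.
by apply: eq_from_tnth => j; rewrite tnth_elem tnth_mktuple addr0; case: eqP => // ->.
Qed.

Lemma elem_comp i f g : vfree i f -> vfree i g ->
  endo_comp (elem i f) (elem i g) = elem i (f + g).
Proof.
move=> fi gi; apply: eq_from_tnth => j; rewrite tnth_mktuple !tnth_elem.
case: (eqVneq j i) => [_|ji]; last by rewrite comp_mpolyXt tnth_elem (negbTE ji).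
by rewrite comp_mpolyD comp_mpolyXt tnth_elem eqxx comp_elem_vfree // addrA.
Qed.

Lemma endo_pow_elem i f k : vfree i f -> endo_pow (elem i f) k = elem i (f *+ k).
Proof.
move=> fi; elim: k => [|k IH] /=; first by rewrite elem0.
have fki : vfree i (f *+ k) by rewrite /vfree raddfMn /= fi.
by rewrite IH elem_comp // mulrS.
Qed.

Lemma comp_elem i f t : fixes i t -> vfree i f ->
  endo_comp t (elem i f) = endo_comp (elem i (f \mPo t)) t.
Proof.
move=> [ti ti'] fi; apply: eq_from_tnth => j; rewrite !tnth_mktuple.
case: (eqVneq j i) => [->|ji]; last by rewrite comp_mpolyXt comp_elem_vfree //; apply: ti'.
by rewrite comp_mpolyD comp_mpolyXt ti comp_mpolyXt tnth_elem eqxx.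
Qed.

End Endomorphisms.

Section Group.
Variables (R : comNzRingType) (n : nat) (e : 'I_n -> nat).
Implicit Types (g h : endo R n) (r : R).

Lemma inG_comp g h : inG e g -> inG e h -> inG e (endo_comp g h).
Proof.
elim=> [|i r g' _ IH] inG_h; first by rewrite endo_comp1l.
by rewrite endo_compA; constructor; apply: IH.
Qed.

Lemma inG_alpha i r : inG e (elem i (r *: 'X_(ordS i) ^+ e i)).
Proof. by have := inG_gen i r (@inG_id R n e); rewrite endo_comp1r. Qed.

Lemma inG_elem_sum i I (s : seq I) (F : I -> {mpoly R[n]}) :
  (forall x, vfree i (F x)) -> (forall x, inG e (elem i (F x))) ->
  inG e (elem i (\sum_(x <- s) F x)).
Proof.
move=> Fi inG_F.
suff [] : inG e (elem i (\sum_(x <- s) F x)) /\ vfree i (\sum_(x <- s) F x) by [].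
apply: (big_ind (fun f => inG e (elem i f) /\ vfree i f)) => [|f g [Gf fi] [Gg gi]|//].
  by rewrite elem0; split; [constructor | apply: vfree0].
by rewrite -elem_comp //; split; [apply: inG_comp | apply: vfreeD].
Qed.

Section Descent.
Variables (i : 'I_n) (Y : {mpoly R[n]}).
Hypotheses (Si_neq_i : ordS i != i) (Yi : vfree i Y) (YSi : vfree (ordS i) Y).
Hypothesis inG_elemS : forall lam : R, inG e (elem (ordS i) (lam *: Y)).

Lemma inG_elem_shift c lam : inG e (elem i (c *: ('X_(ordS i) + lam *: Y) ^+ e i)).
Proof.
set j := ordS i; set shift := elem j (lam *: Y).
have lamY : vfree j (lam *: Y) := vfreeZ lam YSi.
have shift_inv : endo_comp shift (elem j (- lam *: Y)) = endo_id R n.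
  by rewrite elem_comp ?scaleNr ?addrN ?elem0 //; exact: vfreeN.
have -> : c *: ('X_j + lam *: Y) ^+ e i = (c *: 'X_j ^+ e i) \mPo shift.
  by rewrite comp_mpolyZ rmorphXn /= comp_mpolyXt tnth_elem eqxx.
rewrite -[elem i _]endo_comp1r -shift_inv -endo_compA -comp_elem.
- by apply/inG_comp/inG_elemS/inG_comp/inG_alpha/inG_elemS.
- by apply: fixes_elem => //; apply: vfreeZ.
- by apply: vfreeZXU.
Qed.

Lemma inG_elem_descend p : p \in [pchar R] -> (e i < p)%N ->
  forall r, inG e (elem i (r *: Y ^+ e i)).
Proof.
move=> pcharRp lt_ep r; have [u fact_inv] := pchar_fact_inverse pcharRp lt_ep.
set d := e i; set j := ordS i.
pose a (l : 'I_d.+1) : R := (-1) ^+ (d - l) * 'C(d, l)%:R.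
(* the finite difference of order d of [lam |-> ('X_j + lam Y)^d] is [d! Y^d] *)
have -> : r *: Y ^+ d = \sum_(l < d.+1) (r * u * a l) *: ('X_j + l%:R *: Y) ^+ d.
  under eq_bigr do rewrite -scalerA.
  rewrite -scaler_sumr.
  transitivity ((r * u) *: \sum_(l < d.+1)
      ((-1) ^+ (d - l) * 'C(d, l)%:R) * ('X_j + l%:R * Y) ^+ d).
    rewrite alt_binom_sum_affine_exp mulr_natl -scaler_nat scalerA.
    by rewrite -mulrA fact_inv mulr1.
  congr (_ *: _); apply: eq_bigr => l _.
  by rewrite -mul_mpolyC rmorphM rmorphXn rmorphN1 rmorph_nat scaler_nat mulr_natl.
apply: inG_elem_sum => l; last exact: inG_elem_shift.
apply/vfreeZ/vfreeX/vfreeD; first exact: vfreeXU.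
exact: vfreeZ.
Qed.

End Descent.

End Group.

Lemma ordS_max_ord0 n : ordS (@ord_max n) = ord0.
Proof. by apply: val_inj; rewrite /= modnn. Qed.

Lemma val_ordS n (i : 'I_n.+1) : (i < n)%N -> ordS i = i.+1 :> nat.
Proof. by move=> lt_in; rewrite /= modn_small. Qed.

Section Chain.
Variables (R : comNzRingType) (n : nat) (e : 'I_n.+1 -> nat) (p : nat).
Hypotheses (pcharRp : p \in [pchar R]) (e_lt_p : forall i, (e i < p)%N).

Lemma inG_elem_X0 (j : 'I_n.+1) : (0 < j)%N ->
  forall r : R, inG e (elem j (r *: 'X_ord0 ^+ \prod_(i : 'I_n.+1 | (j <= i)%N) e i)).
Proof.
move: j; suff chain t (j : 'I_n.+1) : (0 < j)%N -> (n - j)%N = t ->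
    forall r : R, inG e (elem j (r *: 'X_ord0 ^+ \prod_(i : 'I_n.+1 | (j <= i)%N) e i)).
  by move=> j j_gt0; apply: chain.
elim: t j => [|t IH] j j_gt0 nj r.
  have -> : j = ord_max by apply: val_inj; move: (ltn_ord j) nj => /=; lia.
  rewrite (big_pred1 ord_max) => [|i]; last first.
    by rewrite /= -(inj_eq val_inj) /= eqn_leq leq_ord.
  by rewrite -ordS_max_ord0; apply: inG_alpha.
have lt_jn : (j < n)%N by lia.
have val_Sj := val_ordS lt_jn.
have X0_free k c : k != ord0 -> vfree k ('X_(@ord0 n) ^+ c).
  by move=> k0; apply/vfreeX/vfreeXU; rewrite eq_sym.
have neq0 (k : 'I_n.+1) : (0 < k)%N -> k != ord0 by rewrite -(inj_eq val_inj) /= -lt0n.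
rewrite (bigD1 j) //= mulnC exprM (eq_bigl (fun i : 'I_n.+1 => ordS j <= i)%N) => [|i].
  apply: (inG_elem_descend _ _ _ _ pcharRp) => //.
  - by apply/eqP => /(congr1 (@nat_of_ord _)); rewrite val_Sj; lia.
  - by apply/X0_free/neq0.
  - by apply/X0_free/neq0; rewrite val_Sj.
  - by apply: IH; rewrite val_Sj //; lia.
by rewrite val_Sj ltn_neqAle andbC eq_sym.
Qed.

End Chain.

Section Growth.
Variable R : nzRingType.
Implicit Types p q : {poly R}.

Lemma size_monicX q c : q \is monic -> size (q ^+ c) = ((size q).-1 * c).+1.
Proof.
move=> mq; have sq : (0 < size q)%N by rewrite size_poly_gt0 monic_neq0.
elim: c => [|c IH]; first by rewrite expr0 size_poly1 muln0.
by rewrite exprS size_monicM ?monic_neq0 ?monic_exp // IH; lia.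
Qed.

Lemma monic_size_addX p q c : q \is monic -> (size p <= (size q).-1 * c)%N ->
  p + q ^+ c \is monic /\ size (p + q ^+ c) = ((size q).-1 * c).+1.
Proof.
move=> mq le_pq; have mqc := monic_exp c mq.
have lt_p : (size p < size (q ^+ c))%N by rewrite size_monicX.
split; last by rewrite addrC size_polyDl // size_monicX.
by rewrite monicE lead_coefDr //; apply/eqP/monicP.
Qed.

Variables (d1 d2 : nat) (A B : nat -> {poly R}).
Hypotheses (d1_gt0 : (0 < d1)%N) (d12_gt1 : (1 < d1 * d2)%N).
Hypotheses (A0 : A 0%N = 0) (B0 : B 0%N = 'X).
Hypotheses (A_S : forall t, A t.+1 = A t + B t ^+ d1)
           (B_S : forall t, B t.+1 = B t + A t.+1 ^+ d2).

Lemma monic_size_iter t :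
  [/\ B t \is monic, size (B t) = ((d1 * d2) ^ t).+1,
      A t.+1 \is monic & size (A t.+1) = (d1 * (d1 * d2) ^ t).+1].
Proof.
elim: t => [|t [mB sB mA sA]].
  rewrite A_S A0 B0 add0r size_monicX ?monicX // size_polyX.
  by rewrite monicXn expn0 muln1 mul1n.
have x_gt0 : (0 < (d1 * d2) ^ t)%N by rewrite expn_gt0; lia.
have le_B : (size (B t) <= (size (A t.+1)).-1 * d2)%N by rewrite sA sB /=; nia.
have [mB' sB'] := monic_size_addX mA le_B.
rewrite -B_S sA /= in mB' sB'.
have le_A : (size (A t.+1) <= (size (B t.+1)).-1 * d1)%N by rewrite sA sB' /=; nia.
have [mA' sA'] := monic_size_addX mB' le_A.
rewrite -A_S sB' /= in mA' sA'.
by split; rewrite // ?sB' ?sA' expnS; congr S; ring.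
Qed.

Lemma injective_iterA_exp c : (0 < c)%N -> injective (fun t => A t ^+ c).
Proof.
move=> c_gt0.
have size_Ac t : size (A t.+1 ^+ c) = (c * d1 * (d1 * d2) ^ t).+1.
  by case: (monic_size_iter t) => _ _ mA sA; rewrite size_monicX // sA /= mulnC mulnA.
have A0c : A 0%N ^+ c = 0 by rewrite A0 expr0n eqn0Ngt c_gt0.
have cd1_gt0 : (0 < c * d1)%N by rewrite muln_gt0 c_gt0.
move=> [|t] [|u] //= /(congr1 (fun q : {poly R} => size q));
  rewrite ?A0c ?size_Ac ?size_poly0 //.
by move=> [] /eqP; rewrite eqn_pmul2l // => /eqP /(expnI d12_gt1) ->.
Qed.

End Growth.

Lemma elem_inj (R : comNzRingType) n (i : 'I_n) : injective (@elem R n i).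
Proof.
move=> f g /(congr1 (fun s : endo R n => tnth s i)).
by rewrite !tnth_elem eqxx => /addrI.
Qed.

Definition elem_inG (R : comNzRingType) n (e : 'I_n -> nat) (k : 'I_n) (h : endo R n) :=
  inG e h /\ exists2 q, vfree k q & h = elem k q.

Lemma elem_abelian_elem_inG (R : comNzRingType) n (e : 'I_n -> nat) k p :
  p \in [pchar R] -> elem_abelian_p_subgroup p (@elem_inG R n e k).
Proof.
move=> pcharRp; split.
- by split; [constructor | exists 0; rewrite ?elem0 //; apply: vfree0].
- move=> g h [Gg [f fk eqg]] [Gh [f' fk' eqh]]; split; first exact: inG_comp.
  by exists (f + f'); [apply: vfreeD | rewrite eqg eqh elem_comp].
- by move=> _ _ [_ [f fk ->]] [_ [g gk ->]]; rewrite !elem_comp // addrC.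
- move=> _ [_ [f fk ->]].
  by rewrite endo_pow_elem // -scaler_nat (pcharf0 pcharRp) scale0r elem0.
Qed.

Lemma injective_nat_notin (T : eqType) (F : nat -> T) :
  injective F -> forall s : seq T, exists t, F t \notin s.
Proof.
move=> F_inj s; pose ts := iota 0 (size s).+1.
have [/allP Fs | /allPn [t _ Ft]] := boolP (all (fun t => F t \in s) ts); last by exists t.
have uniq_Fts : uniq (map F ts) by rewrite (map_inj_uniq F_inj) iota_uniq.
have sub : {subset map F ts <= s} by move=> _ /mapP [t /Fs Ft ->].
by have := uniq_leq_size uniq_Fts sub; rewrite size_map size_iota ltnn.
Qed.

Section Orbit.
Variables (R : comNzRingType) (n : nat) (e : 'I_n.+3 -> nat) (p : nat).
Hypotheses (pcharRp : p \in [pchar R]) (e_lt_p : forall i, (e i < p)%N).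
Hypotheses (e_gt0 : forall i, (0 < e i)%N) (e_gt1 : exists i, (1 < e i)%N).
Implicit Type r : R.

Let x0 : 'I_n.+3 := ord0.
Let x1 : 'I_n.+3 := inord 1.
Let xk : 'I_n.+3 := ord_max.
Let D : nat := \prod_(i : 'I_n.+3 | (x1 <= i)%N) e i.

Let x0_neq_x1 : x0 != x1. Proof. by rewrite -(inj_eq val_inj) /= inordK. Qed.
Let x0_neq_xk : x0 != xk. Proof. by rewrite -(inj_eq val_inj). Qed.
Let x1_neq_xk : x1 != xk. Proof. by rewrite -(inj_eq val_inj) /= inordK. Qed.
Let ordS_x0 : ordS x0 = x1. Proof. by apply: val_inj; rewrite /= inordK. Qed.

Let E0 r := elem x0 (r *: 'X_x1 ^+ e x0).
Let E1 r := elem x1 (r *: 'X_x0 ^+ D).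

Let inG_E0 r : inG e (E0 r).
Proof. by rewrite /E0 -ordS_x0; apply: inG_alpha. Qed.

Let inG_E1 r : inG e (E1 r).
Proof. by apply: (inG_elem_X0 pcharRp e_lt_p); rewrite /= inordK. Qed.
Let tau := endo_comp (E0 1) (E1 1).
Let tau_inv := endo_comp (E1 (-1)) (E0 (-1)).

Let E0D r r' : endo_comp (E0 r) (E0 r') = E0 (r + r').
Proof.
have X1_free c : vfree x0 (c *: 'X_x1 ^+ e x0) by apply: vfreeZXU; rewrite eq_sym.
by rewrite /E0 elem_comp // scalerDl.
Qed.

Let E1D r r' : endo_comp (E1 r) (E1 r') = E1 (r + r').
Proof.
have X0_free c : vfree x1 (c *: 'X_x0 ^+ D) by apply: vfreeZXU.
by rewrite /E1 elem_comp // scalerDl.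
Qed.

Let tauK : endo_comp tau tau_inv = endo_id R n.+3.
Proof.
rewrite endo_compA -(endo_compA (E1 1)) E1D subrr.
rewrite /E1 scale0r elem0 endo_comp1l E0D subrr.
by rewrite /E0 scale0r elem0.
Qed.

Let fixes_tau : fixes xk tau.
Proof. by apply: fixes_comp; apply: fixes_elem => //; apply: vfreeZXU. Qed.

Let inG_tau : inG e tau. Proof. exact: inG_comp. Qed.
Let inG_tau_inv : inG e tau_inv. Proof. exact: inG_comp. Qed.

Let orbit t := 'X_x0 ^+ e xk \mPo endo_pow tau t.

Let orbit_elem_inG t : elem_inG e xk (elem xk (orbit t)).
Proof.
suff [] : inG e (elem xk (orbit t)) /\ vfree xk (orbit t) by split=> //; exists (orbit t).
elim: t => [|t [G_t free_t]].
  rewrite /orbit comp_mpoly_id; split; last exact/vfreeX/vfreeXU.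
  by have := inG_alpha (R := R) e xk 1; rewrite ordS_max_ord0 scale1r.
have -> : orbit t.+1 = orbit t \mPo tau by rewrite /orbit comp_mpolyA.
split; last exact: vfree_comp.
rewrite -[elem xk _]endo_comp1r -tauK -endo_compA -comp_elem //.
by apply: inG_comp => //; apply: inG_comp.
Qed.

Let ev (q : {mpoly R[n.+3]}) : {poly R} :=
  mmap (@polyC R) (fun j => if j == x1 then 'X else 0) q.
Let A t := ev (tnth (endo_pow tau t) x0).
Let B t := ev (tnth (endo_pow tau t) x1).

Let evX j : ev 'X_j = if j == x1 then 'X else 0.
Proof. by rewrite /ev mmapX mmap1U. Qed.

Let A0 : A 0%N = 0. Proof. by rewrite /A tnth_mktuple evX (negbTE x0_neq_x1). Qed.
Let B0 : B 0%N = 'X. Proof. by rewrite /B tnth_mktuple evX eqxx. Qed.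

Let tau_x0 : tnth tau x0 = 'X_x0 + 'X_x1 ^+ e x0.
Proof.
rewrite tnth_mktuple tnth_elem (negbTE x0_neq_x1) comp_mpolyXt tnth_elem eqxx.
by rewrite scale1r.
Qed.

Let tau_x1 : tnth tau x1 = 'X_x1 + ('X_x0 + 'X_x1 ^+ e x0) ^+ D.
Proof.
rewrite tnth_mktuple tnth_elem eqxx comp_mpolyD comp_mpolyZ rmorphXn /=.
by rewrite !comp_mpolyXt !tnth_elem eqxx eq_sym (negbTE x0_neq_x1) !scale1r.
Qed.

Let A_S t : A t.+1 = A t + B t ^+ e x0.
Proof.
rewrite /A /B endo_powSr tnth_mktuple tau_x0 comp_mpolyD rmorphXn /=.
by rewrite !comp_mpolyXt /ev rmorphD rmorphXn.
Qed.

Let B_S t : B t.+1 = B t + A t.+1 ^+ D.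
Proof.
rewrite A_S /A /B endo_powSr tnth_mktuple tau_x1 comp_mpolyD rmorphXn /=.
by rewrite comp_mpolyD rmorphXn /= !comp_mpolyXt /ev !(rmorphD, rmorphXn).
Qed.

Let ev_orbit t : ev (orbit t) = A t ^+ e xk.
Proof. by rewrite /orbit rmorphXn /= comp_mpolyXt /ev rmorphXn. Qed.

Let prod_e_gt1 : (1 < e x0 * D)%N.
Proof.
have -> : (e x0 * D = \prod_i e i)%N.
  rewrite (bigD1 x0) //=; congr (_ * _); apply: eq_bigl => i.
  by rewrite /= inordK // lt0n -(inj_eq val_inj).
have [i e_i_gt1] := e_gt1.
have : (e i <= \prod_j e j)%N by rewrite (bigD1 i) //= leq_pmulr // prodn_gt0.
lia.
Qed.

Let orbit_inj : injective orbit.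
Proof.
move=> t u /(congr1 ev); rewrite !ev_orbit.
exact: (injective_iterA_exp (e_gt0 x0) prod_e_gt1 A0 B0 A_S B_S (e_gt0 xk)).
Qed.

Lemma elem_inG_infinite : infinite_set (@elem_inG R _ e xk).
Proof.
move=> s; have [t orbit_t] := injective_nat_notin (inj_comp (@elem_inj R _ xk) orbit_inj) s.
by exists (elem xk (orbit t)).
Qed.

End Orbit.

Theorem mainTheorem10 (n : nat) (e : 'I_n -> nat) (p : nat) (R : comNzRingType) :
  (3 <= n)%N ->
  (forall i, 1 <= e i)%N ->
  p \in [pchar R] ->
  (forall i, e i < p)%N ->
  (exists i, 1 < e i)%N ->
  exists H : endo R n -> Prop,
    (forall h, H h -> inG e h) /\
    elem_abelian_p_subgroup p H /\
    infinite_set H.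
Proof.
case: n e => [|[|[|n]]] // e _ e_gt0 pcharRp e_lt_p e_gt1.
exists (@elem_inG R _ e ord_max); split; first by move=> h [].
split; first exact: elem_abelian_elem_inG.
exact: (elem_inG_infinite pcharRp).
Qed.
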